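(* Let $E$ be a $\sigma$-unital $C^*$-algebra and let $L\subseteq M(E)$ be a separable sub-$C^*$-algebra. Then there exists a separable sub-$C^*$-algebra $D\subseteq E$ containing an approximate unit for $E$ such that the image of the naturally induced unital injective $*$-homomorphism $M(D)\to M(E)$ contains $L$.
   Context: If $D\subseteq E$ is a sub-$C^*$-algebra containing an approximate unit of $E$, the inclusion $D\to E$ induces a unital injective $*$-homomorphism $M(D)\to M(E)$ (realizing $M(D)=\{x\in D^{**}:xD+Dx\subseteq D\}\subseteq D^{**}\subseteq E^{**}$ and similarly for $E$). *)

From HB Require Import structures.
From mathcomp Require Import all_boot all_order all_algebra.
From mathcomp Require Import reals complex.
Set Implicit Arguments. Unset Strict Implicit. Unset Printing Implicit Defensive.
Import Order.TTheory GRing.Theory Num.Theory.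
Local Open Scope ring_scope.

Record CStarAlg (R : realType) := {
  cs_carrier :> lmodType (R[i]);
  cs_mul  : cs_carrier -> cs_carrier -> cs_carrier;
  cs_star : cs_carrier -> cs_carrier;
  cs_norm : cs_carrier -> R;
  cs_mulA : forall x y z, cs_mul x (cs_mul y z) = cs_mul (cs_mul x y) z;
  cs_mulDl : forall x y z, cs_mul (x + y) z = cs_mul x z + cs_mul y z;
  cs_mulDr : forall x y z, cs_mul x (y + z) = cs_mul x y + cs_mul x z;
  cs_mulZl : forall (c : R[i]) x y, cs_mul (c *: x) y = c *: cs_mul x y;
  cs_mulZr : forall (c : R[i]) x y, cs_mul x (c *: y) = c *: cs_mul x y;
  cs_starK : forall x, cs_star (cs_star x) = x;
  cs_starD : forall x y, cs_star (x + y) = cs_star x + cs_star y;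
  cs_starZ : forall (c : R[i]) x, cs_star (c *: x) = conjc c *: cs_star x;
  cs_starM : forall x y, cs_star (cs_mul x y) = cs_mul (cs_star y) (cs_star x);
  cs_norm_eq0 : forall x, cs_norm x = 0 -> x = 0;
  cs_normD : forall x y, cs_norm (x + y) <= cs_norm x + cs_norm y;
  cs_normZ : forall (c : R[i]) x, cs_norm (c *: x) = Normc.normc c * cs_norm x;
  cs_normM : forall x y, cs_norm (cs_mul x y) <= cs_norm x * cs_norm y;
  cs_normC : forall x, cs_norm (cs_mul (cs_star x) x) = cs_norm x ^+ 2;
  cs_complete : forall u : nat -> cs_carrier,
    (forall e : R, 0 < e -> exists N, forall m n, (N <= m)%N -> (N <= n)%N ->
        cs_norm (u m - u n) < e) ->
    exists l, forall e : R, 0 < e -> exists N, forall n, (N <= n)%N ->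
        cs_norm (u n - l) < e
}.

Section CStar.
Variables (R : realType) (E : CStarAlg R).
Local Notation "x ** y" := (cs_mul x y) (at level 40, left associativity).

Definition subset_of := E -> Prop.

Definition seq_cvg (u : nat -> E) (l : E) :=
  forall e : R, 0 < e -> exists N, forall n, (N <= n)%N -> cs_norm (u n - l) < e.

Definition sub_cstar (D : subset_of) :=
  ((D 0) /\
   (forall x y, D x -> D y -> D (x + y)) /\
   (forall (c : R[i]) x, D x -> D (c *: x)) /\
   (forall x y, D x -> D y -> D (x ** y)) /\
   (forall x, D x -> D (cs_star x)) /\
   (forall u l, (forall n, D (u n)) -> seq_cvg u l -> D l)).

Definition separable (D : subset_of) :=
  exists s : nat -> E, (forall n, D (s n)) /\
    forall x, D x -> forall e : R, 0 < e -> exists n, cs_norm (x - s n) < e.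

Definition positive (x : E) := exists b, x = cs_star b ** b.

Definition approx_unit_in (D : subset_of) (I : Type) (le : I -> I -> Prop)
    (e : I -> E) :=
  ((exists i : I, True) /\
   (forall i, le i i) /\
   (forall i j k, le i j -> le j k -> le i k) /\
   (forall i j, exists k, le i k /\ le j k) /\
   (forall i, D (e i) /\ positive (e i) /\ cs_norm (e i) <= 1) /\
   (forall i j, le i j -> positive (e j - e i)) /\
   (forall x (eps : R), 0 < eps -> exists i0, forall i, le i0 i ->
          cs_norm (e i ** x - x) < eps /\ cs_norm (x ** e i - x) < eps)).

Definition contains_approx_unit (D : subset_of) :=
  exists (I : Type) (le : I -> I -> Prop) (e : I -> E), approx_unit_in D le e.

Definition sigma_unital :=
  exists e : nat -> E, approx_unit_in (fun _ => True) (fun m n => (m <= n)%N) e.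

(** * Multiplier algebra M(E) as double centralizers (L, R) *)
Definition mult := ((E -> E) * (E -> E))%type.

Definition is_linear (f : E -> E) :=
  forall (c : R[i]) x y, f (c *: x + y) = c *: f x + f y.

Definition is_dc (m : mult) :=
  [/\ is_linear m.1, is_linear m.2 & forall x y, x ** m.1 y = m.2 x ** y].

Definition mzero : mult := (fun _ => 0, fun _ => 0).
Definition madd (m n : mult) : mult := (fun x => m.1 x + n.1 x, fun x => m.2 x + n.2 x).
Definition mscale (c : R[i]) (m : mult) : mult := (fun x => c *: m.1 x, fun x => c *: m.2 x).
Definition mmul (m n : mult) : mult := (fun x => m.1 (n.1 x), fun x => n.2 (m.2 x)).
Definition mstar (m : mult) : mult := (fun x => cs_star (m.2 (cs_star x)), fun x => cs_star (m.1 (cs_star x))).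

(** operator-norm bound ||m - n|| <= r (the norm of (L,R) is ||L||) *)
Definition mdist_le (m n : mult) (r : R) := forall x, cs_norm (m.1 x - n.1 x) <= r * cs_norm (x).

Definition mseq_cvg (u : nat -> mult) (l : mult) :=
  forall e : R, 0 < e -> exists N, forall n, (N <= n)%N -> mdist_le (u n) l e.

Definition msub_cstar (S : mult -> Prop) :=
  ((forall m, S m -> is_dc m) /\
   (S mzero) /\
   (forall m n, S m -> S n -> S (madd m n)) /\
   (forall c m, S m -> S (mscale c m)) /\
   (forall m n, S m -> S n -> S (mmul m n)) /\
   (forall m, S m -> S (mstar m)) /\
   (forall u l, (forall n, S (u n)) -> is_dc l -> mseq_cvg u l -> S l)).

Definition mseparable (S : mult -> Prop) :=
  exists s : nat -> mult, (forall n, S (s n)) /\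
    forall m, S m -> forall e : R, 0 < e -> exists n, mdist_le m (s n) e.

(** double centralizers of a sub-C*-algebra D (elements of M(D)), represented by
    maps on E whose relevant behaviour is their restriction to D *)
Definition is_dc_on (D : subset_of) (n : mult) :=
  [/\ (forall x, D x -> D (n.1 x) /\ D (n.2 x)),
      (forall (c : R[i]) x y, D x -> D y -> n.1 (c *: x + y) = c *: n.1 x + n.1 y
                                        /\ n.2 (c *: x + y) = c *: n.2 x + n.2 y) &
      (forall x y, D x -> D y -> x ** n.1 y = n.2 x ** y)].

(** graph of the induced map M(D) -> M(E) (when D contains an approximate unit
    of E): n in M(D) is sent to the unique m in M(E) extending n *)
Definition induced_mult (D : subset_of) (n m : mult) :=
  [/\ is_dc_on D n, is_dc m & forall d, D d -> m.1 d = n.1 d /\ m.2 d = n.2 d].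

Definition in_image_of_MD (D : subset_of) (m : mult) :=
  exists n, induced_mult D n m.

End CStar.

From HB Require Import structures.
From mathcomp Require Import all_boot all_order all_algebra.
From mathcomp Require Import reals complex.
From mathcomp Require Import ring lra.
Set Implicit Arguments. Unset Strict Implicit. Unset Printing Implicit Defensive.
Import Order.TTheory GRing.Theory Num.Theory.
Local Open Scope ring_scope.

(* Let (e_k) be a sequential approximate unit of E and (s_j) a dense sequence
   in L, and let D be the norm closure of the Q[i]-*-algebra generated by the
   e_k and the s_j e_k; D is separable and contains the approximate unit.
   Every m in L is a norm limit of the s_j, so m e_k lies in D. For d in D,
   d m = lim d (m e_k) then lies in D, and so does m d = lim (e_k m) d.
   Hence m restricts to a double centralizer of D, whose extension to E is m. *)

Section CStarNorm.
Variables (R : realType) (E : CStarAlg R).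
Local Notation "x ** y" := (cs_mul x y) (at level 40, left associativity).
Local Notation N := (@cs_norm R E).

Lemma cs_norm0 : N 0 = 0.
Proof. by rewrite -(scale0r (0 : E)) cs_normZ Normc.normc0 mul0r. Qed.

Lemma cs_normN (x : E) : N (- x) = N x.
Proof. by rewrite -scaleN1r cs_normZ normcN Normc.normc1 mul1r. Qed.

Lemma cs_norm_ge0 (x : E) : 0 <= N x.
Proof. by have := cs_normD x (- x); rewrite subrr cs_norm0 cs_normN; lra. Qed.

Lemma cs_normB (x y : E) : N (x - y) = N (y - x).
Proof. by rewrite -opprB cs_normN. Qed.

Lemma cs_mulBl (x y z : E) : (x - y) ** z = x ** z - y ** z.
Proof. by rewrite cs_mulDl -scaleN1r cs_mulZl scaleN1r. Qed.

Lemma cs_mulBr (x y z : E) : z ** (x - y) = z ** x - z ** y.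
Proof. by rewrite cs_mulDr -scaleN1r cs_mulZr scaleN1r. Qed.

Lemma cs_starB (x y : E) : cs_star (x - y) = cs_star x - cs_star y.
Proof. by rewrite cs_starD -scaleN1r cs_starZ rmorphN1 scaleN1r. Qed.

Lemma cs_norm_star_le (x : E) : N x <= N (cs_star x).
Proof.
have := cs_normM (cs_star x) x; rewrite cs_normC.
by have := cs_norm_ge0 x; have := cs_norm_ge0 (cs_star x); nra.
Qed.

Lemma cs_norm_star (x : E) : N (cs_star x) = N x.
Proof.
apply/eqP; rewrite eq_le cs_norm_star_le andbT.
by have := cs_norm_star_le (cs_star x); rewrite cs_starK.
Qed.

End CStarNorm.

Lemma mul_div_lt_half (R : realFieldType) (a eps : R) :
  0 <= a -> 0 < eps -> a * (eps / (2 * (a + 1))) < eps / 2.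
Proof.
move=> ha he; set t := eps / (2 * (a + 1)).
have ht : t * (2 * (a + 1)) = eps by rewrite /t mulfVK //; lra.
have : 0 < t by rewrite /t divr_gt0 //; lra.
nra.
Qed.

Section RatComplex.
Variable R : realType.

Definition ratc (z1 z2 : int) (n : nat) : R[i] :=
  Complex (z1%:~R / n.+1%:R) (z2%:~R / n.+1%:R).

Lemma ratc000 : ratc 0 0 0 = 0.
Proof. by rewrite /ratc mul0r. Qed.

Lemma floor_div_approx (a d : R) (n : nat) : 0 < d -> d^-1 < n.+1%:R ->
  `|a - (Num.floor (a * n.+1%:R))%:~R / n.+1%:R| < d.
Proof.
move=> hd hn; set M : R := n.+1%:R; have hM : 0 < M by rewrite ltr0n.
set z : R := (Num.floor (a * M))%:~R.
have z_le : z <= a * M by exact: floor_le.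
have z_gt : a * M < z + 1 by rewrite /z -[1]/(1%:~R) -intrD; exact: floorD1_gt.
have -> : a - z / M = (a * M - z) / M by field; lra.
rewrite normrM ger0_norm ?subr_ge0 // ger0_norm ?invr_ge0 ?ltW //.
rewrite ltr_pdivrMr //.
have : 1 < d * M by rewrite -ltr_pdivrMl // mulr1.
lra.
Qed.

Lemma normc_le_norm_parts (a b : R) : Normc.normc (Complex a b) <= `|a| + `|b|.
Proof.
have h : 0 <= `|a| + `|b| by rewrite addr_ge0.
rewrite /Normc.normc -(ger0_norm h) -sqrtr_sqr ler_wsqrtr //.
rewrite -(real_normK (num_real a)) -(real_normK (num_real b)).
by have := normr_ge0 a; have := normr_ge0 b; nra.
Qed.

Lemma ratc_dense (c : R[i]) (d : R) : 0 < d ->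
  exists z1 z2 n, Normc.normc (c - ratc z1 z2 n) < d.
Proof.
case: c => a b hd; have hd2 : 0 < d / 2 by lra.
pose n := Num.truncn ((d / 2)^-1).
have hn : (d / 2)^-1 < n.+1%:R by exact: truncnS_gt.
exists (Num.floor (a * n.+1%:R)), (Num.floor (b * n.+1%:R)), n.
have := floor_div_approx a hd2 hn; have := floor_div_approx b hd2 hn.
move=> hb ha; apply: le_lt_trans (normc_le_norm_parts _ _) _; rewrite /=; lra.
Qed.

End RatComplex.
Arguments ratc {R}.

Section NormClosure.
Variables (R : realType) (E : CStarAlg R).
Local Notation "x ** y" := (cs_mul x y) (at level 40, left associativity).
Local Notation N := (@cs_norm R E).

Definition norm_closure (C : subset_of E) : subset_of E :=
  fun x => forall eps : R, 0 < eps -> exists y, C y /\ N (x - y) < eps.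

Definition qi_star_subalg (C : subset_of E) :=
  [/\ C 0, forall x y, C x -> C y -> C (x + y),
      forall z1 z2 n x, C x -> C (ratc z1 z2 n *: x),
      forall x y, C x -> C y -> C (x ** y) &
      forall x, C x -> C (cs_star x)].

Variable C : subset_of E.

Lemma subset_norm_closure x : C x -> norm_closure C x.
Proof. by move=> Cx eps he; exists x; rewrite subrr cs_norm0. Qed.

Lemma norm_closure_idem x : norm_closure (norm_closure C) x -> norm_closure C x.
Proof.
move=> hx eps he; have he2 : 0 < eps / 2 by lra.
have [y [hy hxy]] := hx _ he2; have [z [Cz hyz]] := hy _ he2.
exists z; split => //; have := cs_normD (x - y) (y - z).
by rewrite addrA subrK; lra.
Qed.

Lemma norm_closure_lim u l :
  (forall n, norm_closure C (u n)) -> seq_cvg u l -> norm_closure C l.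
Proof.
move=> hu hcvg; apply: norm_closure_idem => eps he.
have [M hM] := hcvg _ he; exists (u M); split => //.
by rewrite cs_normB; exact: hM.
Qed.

Lemma norm_closure_mult_apply (m : mult E) (s : nat -> mult E) x :
  (forall eps : R, 0 < eps -> exists n, mdist_le m (s n) eps) ->
  (forall n, norm_closure C ((s n).1 x)) -> norm_closure C (m.1 x).
Proof.
move=> hs hsx; apply: norm_closure_idem => eps he.
have hx := cs_norm_ge0 x.
have [|n hn] := hs (eps / (2 * (N x + 1))); first by rewrite divr_gt0 //; lra.
exists ((s n).1 x); split => //.
by have := hn x; have := mul_div_lt_half hx he; rewrite mulrC; lra.
Qed.

Hypothesis qsubC : qi_star_subalg C.

Lemma norm_closureD x y :
  norm_closure C x -> norm_closure C y -> norm_closure C (x + y).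
Proof.
have [_ CD _ _ _] := qsubC.
move=> hx hy eps he; have he2 : 0 < eps / 2 by lra.
have [c [Cc hxc]] := hx _ he2; have [d [Cd hyd]] := hy _ he2.
exists (c + d); split; first exact: CD.
rewrite opprD addrACA; have := cs_normD (x - c) (y - d); lra.
Qed.

Lemma norm_closureM x y :
  norm_closure C x -> norm_closure C y -> norm_closure C (x ** y).
Proof.
have [_ _ _ CM _] := qsubC.
move=> hx hy eps he; have hx0 := cs_norm_ge0 x.
have [|d [Cd hyd]] := hy (eps / (2 * (N x + 1))); first by rewrite divr_gt0 //; lra.
have hd0 := cs_norm_ge0 d.
have [|c [Cc hxc]] := hx (eps / (2 * (N d + 1))); first by rewrite divr_gt0 //; lra.
exists (c ** d); split; first exact: CM.
have -> : x ** y - c ** d = x ** (y - d) + (x - c) ** d.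
  by rewrite cs_mulBr cs_mulBl addrA subrK.
have := cs_normD (x ** (y - d)) ((x - c) ** d).
have := cs_normM x (y - d); have := cs_normM (x - c) d.
have := mul_div_lt_half hx0 he; have := mul_div_lt_half hd0 he.
have : N x * N (y - d) <= N x * (eps / (2 * (N x + 1))) by rewrite ler_wpM2l // ltW.
have : N (x - c) * N d <= N d * (eps / (2 * (N d + 1))).
  by rewrite mulrC ler_wpM2l // ltW.
lra.
Qed.

Lemma norm_closureZ (c : R[i]) x : norm_closure C x -> norm_closure C (c *: x).
Proof.
have [_ _ CZ _ _] := qsubC.
move=> hx eps he; have hc0 : 0 <= Normc.normc c.
  by case: c => a b; rewrite /Normc.normc sqrtr_ge0.
have [|d [Cd hxd]] := hx (eps / (2 * (Normc.normc c + 1))).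
  by rewrite divr_gt0 //; lra.
have hd0 := cs_norm_ge0 d.
have [|z1 [z2 [n hcz]]] := @ratc_dense _ c (eps / (2 * (N d + 1))).
  by rewrite divr_gt0 //; lra.
exists (ratc z1 z2 n *: d); split; first exact: CZ.
have -> : c *: x - ratc z1 z2 n *: d = c *: (x - d) + (c - ratc z1 z2 n) *: d.
  by rewrite scalerBr scalerBl addrA subrK.
have := cs_normD (c *: (x - d)) ((c - ratc z1 z2 n) *: d); rewrite !cs_normZ.
have := mul_div_lt_half hc0 he; have := mul_div_lt_half hd0 he.
have : Normc.normc c * N (x - d)
    <= Normc.normc c * (eps / (2 * (Normc.normc c + 1))) by rewrite ler_wpM2l // ltW.
have : Normc.normc (c - ratc z1 z2 n) * N d <= N d * (eps / (2 * (N d + 1))).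
  by rewrite mulrC ler_wpM2l // ltW.
lra.
Qed.

Lemma norm_closure_star x : norm_closure C x -> norm_closure C (cs_star x).
Proof.
have [_ _ _ _ CV] := qsubC.
move=> hx eps he; have [c [Cc hxc]] := hx _ he.
by exists (cs_star c); rewrite -cs_starB cs_norm_star; split; first exact: CV.
Qed.

Lemma sub_cstar_norm_closure : sub_cstar (norm_closure C).
Proof.
have [C0 _ _ _ _] := qsubC.
split; first exact: subset_norm_closure.
split; first exact: norm_closureD.
split; first exact: norm_closureZ.
split; first exact: norm_closureM.
split; first exact: norm_closure_star.
exact: norm_closure_lim.
Qed.

End NormClosure.

Inductive qterm : Type :=
  | QGen of nat
  | QAdd of qterm & qterm
  | QScale of int & int & nat & qterm
  | QMul of qterm & qterm
  | QStar of qterm.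

Fixpoint qterm_tree (t : qterm) : GenTree.tree (int * int * nat) :=
  match t with
  | QGen n => GenTree.Leaf (0%Z, 0%Z, n)
  | QAdd a b => GenTree.Node 0 [:: qterm_tree a; qterm_tree b]
  | QScale z1 z2 n a => GenTree.Node 1 [:: GenTree.Leaf (z1, z2, n); qterm_tree a]
  | QMul a b => GenTree.Node 2 [:: qterm_tree a; qterm_tree b]
  | QStar a => GenTree.Node 3 [:: qterm_tree a]
  end.

Fixpoint tree_qterm (t : GenTree.tree (int * int * nat)) : option qterm :=
  match t with
  | GenTree.Leaf (_, _, n) => Some (QGen n)
  | GenTree.Node 0 [:: a; b] =>
      obind (fun a => omap (QAdd a) (tree_qterm b)) (tree_qterm a)
  | GenTree.Node 1 [:: GenTree.Leaf (z1, z2, n); a] =>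
      omap (QScale z1 z2 n) (tree_qterm a)
  | GenTree.Node 2 [:: a; b] =>
      obind (fun a => omap (QMul a) (tree_qterm b)) (tree_qterm a)
  | GenTree.Node 3 [:: a] => omap QStar (tree_qterm a)
  | _ => None
  end.

Lemma qterm_treeK : pcancel qterm_tree tree_qterm.
Proof. by elim=> //= [a -> b -> | z1 z2 n a -> | a -> b -> | a ->]. Qed.

HB.instance Definition _ := PCanIsCountable qterm_treeK.

Section QStarAlg.
Variables (R : realType) (E : CStarAlg R) (g : nat -> E).
Local Notation "x ** y" := (cs_mul x y) (at level 40, left associativity).

Fixpoint qeval (t : qterm) : E :=
  match t with
  | QGen n => g n
  | QAdd a b => qeval a + qeval b
  | QScale z1 z2 n a => ratc z1 z2 n *: qeval a
  | QMul a b => qeval a ** qeval b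
  | QStar a => cs_star (qeval a)
  end.

Definition qstar_alg : subset_of E := fun x => exists t, qeval t = x.

Lemma qstar_alg_gen n : qstar_alg (g n).
Proof. by exists (QGen n). Qed.

Lemma qi_star_subalg_qstar_alg : qi_star_subalg qstar_alg.
Proof.
split.
- by exists (QScale 0 0 0 (QGen 0)); rewrite /= ratc000 scale0r.
- by move=> _ _ [a <-] [b <-]; exists (QAdd a b).
- by move=> z1 z2 n _ [a <-]; exists (QScale z1 z2 n a).
- by move=> _ _ [a <-] [b <-]; exists (QMul a b).
- by move=> _ [a <-]; exists (QStar a).
Qed.

Lemma separable_norm_closure_qstar_alg : separable (norm_closure qstar_alg).
Proof.
exists (fun n => qeval (odflt (QGen 0) (unpickle n))); split.
  by move=> n; apply: subset_norm_closure; eexists.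
move=> x hx eps he; have [_ [[t <-] hxt]] := hx _ he.
by exists (pickle t); rewrite pickleK.
Qed.

End QStarAlg.

Section Multipliers.
Variables (R : realType) (E : CStarAlg R).
Local Notation "x ** y" := (cs_mul x y) (at level 40, left associativity).

Lemma approx_unit_in_sub (D D' : subset_of E) (I : Type) (le : I -> I -> Prop)
    (e : I -> E) :
  (forall i, D (e i)) -> approx_unit_in D' le e -> approx_unit_in D le e.
Proof.
move=> De [h0 [h1 [h2 [h3 [h4 h5]]]]]; do 4 split => //.
by split => // i; have [_ he] := h4 i.
Qed.

Lemma approx_unit_cvg (D : subset_of E) (e : nat -> E) :
  approx_unit_in D (fun m n => (m <= n)%N) e -> forall x,
  seq_cvg (fun n => e n ** x) x /\ seq_cvg (fun n => x ** e n) x.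
Proof.
case=> _ [_ [_ [_ [_ [_ hcvg]]]]] x.
by split => eps he; have [i0 hi0] := hcvg x eps he; exists i0 => i /hi0 [].
Qed.

Variables (D : subset_of E) (m : mult E).

Lemma stable_of_approx_unit (e : nat -> E) :
  sub_cstar D -> is_dc m -> (forall n, D (e n)) -> (forall n, D (m.1 (e n))) ->
  (forall x, seq_cvg (fun n => e n ** x) x /\ seq_cvg (fun n => x ** e n) x) ->
  forall x, D x -> D (m.1 x) /\ D (m.2 x).
Proof.
case=> _ [_ [_ [DM [_ Dlim]]]] [_ _ mid] De Dme hcvg.
have Dm2 x : D x -> D (m.2 x).
  move=> Dx; apply: (Dlim (fun n => x ** m.1 (e n))) => [n|]; first exact: DM.
  by move=> eps he; have [i0 hi0] := (hcvg (m.2 x)).2 eps he;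
     exists i0 => n /hi0; rewrite mid.
move=> x Dx; split; last exact: Dm2.
apply: (Dlim (fun n => m.2 (e n) ** x)) => [n|]; first exact/DM/Dx/Dm2.
by move=> eps he; have [i0 hi0] := (hcvg (m.1 x)).1 eps he;
   exists i0 => n /hi0; rewrite mid.
Qed.

Lemma in_image_of_MD_of_stable :
  is_dc m -> (forall x, D x -> D (m.1 x) /\ D (m.2 x)) -> in_image_of_MD D m.
Proof.
move=> mdc Dm; have [lin1 lin2 mid] := mdc.
by exists m; split => //; split.
Qed.

End Multipliers.

Theorem mainTheorem10 (R : realType) (E : CStarAlg R) (L : mult E -> Prop) :
  sigma_unital E ->
  msub_cstar L -> mseparable L ->
  exists D : subset_of E,
    [/\ sub_cstar D, separable D, contains_approx_unit D &
        forall m, L m -> in_image_of_MD D m].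
Proof.
case=> e hau [Ldc _] [s [_ Ldense]].
pose g n := match unpickle n : option (option nat * nat) with
            | Some (Some j, k) => (s j).1 (e k)
            | Some (None, k) => e k
            | None => 0
            end.
pose D := norm_closure (qstar_alg g).
have De k : D (e k).
  by apply: subset_norm_closure; have := qstar_alg_gen g (pickle ((None, k) : option nat * nat));
     rewrite /g pickleK.
have Dsub : sub_cstar D := sub_cstar_norm_closure (qi_star_subalg_qstar_alg g).
exists D; split => //.
- exact: separable_norm_closure_qstar_alg.
- by exists nat, (fun m n => (m <= n)%N), e; exact: approx_unit_in_sub hau.
move=> m Lm; apply: in_image_of_MD_of_stable (Ldc m Lm) _.
apply: stable_of_approx_unit Dsub (Ldc m Lm) De _ (approx_unit_cvg hau) => k.
apply: norm_closure_mult_apply (Ldense m Lm) _ => j.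
by apply: subset_norm_closure; have := qstar_alg_gen g (pickle (Some j, k));
   rewrite /g pickleK.
Qed.
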